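(* Let $\{A_1,\dots,A_k\}\subseteq H_n$ and $\{B_1,\dots,B_k\}\subseteq H_m$ be two commuting families, and let $U\in M_n$, $V\in M_m$ be unitary matrices such that $U^*A_iU=\mathrm{diag}(a_{i1},\dots,a_{in})$ and $VB_iV^*=\mathrm{diag}(b_{i1},\dots,b_{im})$ for $i=1,\dots,k$. Let $(a_{ij})\in M_{k,n}$ and $(b_{ij})\in M_{k,m}$ be the real matrices formed from these diagonals. The following are equivalent: (a) there is a completely positive map $\Phi:M_n\to M_m$ with $\Phi(A_i)=B_i$ for $i=1,\dots,k$; (b) there is an $n\times m$ entrywise nonnegative matrix $D=(d_{pq})$ with $(b_{ij})=(a_{ij})D$. If (b) holds and, for $1\le j\le m$, $F_j\in M_{n,m}$ denotes the matrix whose $j$-th column is $(\sqrt{d_{1j}},\dots,\sqrt{d_{nj}})^t$ and whose other entries are zero, then $B_i=\sum_{j=1}^m (UF_jV)^*A_i(UF_jV)$ for $i=1,\dots,k$. Furthermore: (1) a map $\Phi$ as in (a) can be chosen unital if and only if $D$ in (b) can be chosen column stochastic; (2) a map $\Phi$ as in (a) can be chosen trace preserving if and only if $D$ in (b) can be chosen row stochastic; (3) a map $\Phi$ as in (a) can be chosen unital and trace preserving if and only if $D$ in (b) can be chosen doubly stochastic (in which case $m=n$).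
   Context: $H_n$ is the set of $n\times n$ complex Hermitian matrices. A linear map $\Phi:M_n\to M_m$ is completely positive if for every $k\ge1$ the map $(A_{ij})\mapsto(\Phi(A_{ij}))$ on $k\times k$ block matrices with blocks in $M_n$ sends positive semidefinite matrices to positive semidefinite matrices; it is unital if $\Phi(I_n)=I_m$ and trace preserving if $\mathrm{tr}\,\Phi(A)=\mathrm{tr}\,A$ for all $A$. A nonnegative matrix is column (resp. row) stochastic if every column (resp. row) sums to 1, and doubly stochastic if square and both row and column stochastic. *)

(* Complex numbers are modelled by an arbitrary
   C : numClosedFieldType (e.g. algC). *)
From HB Require Import structures.
From mathcomp Require Import all_boot all_order all_algebra.
Set Implicit Arguments. Unset Strict Implicit. Unset Printing Implicit Defensive.
Import Order.TTheory GRing.Theory Num.Theory.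
Local Open Scope ring_scope.
Local Open Scope sesquilinear_scope.

(* A^* (conjugate transpose) is  A ^t*  (spectral.v);
   Hermitian matrices: A \is hermsymmx  (sesquilinear.v);
   unitary matrices: U \is unitarymx   (spectral.v). *)

Definition psdmx {C : numClosedFieldType} (n : nat) (A : 'M[C]_n) : Prop :=
  A \is hermsymmx /\ forall x : 'cV[C]_n, 0 <= (x ^t* *m A *m x) 0 0.

Definition blockmx {C : numClosedFieldType} (n k : nat)
  (A : 'I_k -> 'I_k -> 'M[C]_n) : 'M[C]_(\sum_(i < k) n) :=
  \mxblock_(i < k, j < k) A i j.

Definition completely_positive {C : numClosedFieldType} (n m : nat)
  (Phi : 'M[C]_n -> 'M[C]_m) : Prop :=
  forall (k : nat) (A : 'I_k -> 'I_k -> 'M[C]_n),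
    psdmx (blockmx A) -> psdmx (blockmx (fun i j => Phi (A i j))).

Definition unital_map {C : numClosedFieldType} (n m : nat)
  (Phi : 'M[C]_n -> 'M[C]_m) : Prop := Phi 1%:M = 1%:M.

Definition trace_preserving {C : numClosedFieldType} (n m : nat)
  (Phi : 'M[C]_n -> 'M[C]_m) : Prop := forall A : 'M[C]_n, \tr (Phi A) = \tr A.

Definition nonneg_mx {C : numClosedFieldType} (p q : nat) (D : 'M[C]_(p, q)) : Prop :=
  forall i j, 0 <= D i j.

Definition col_stochastic {C : numClosedFieldType} (p q : nat) (D : 'M[C]_(p, q)) : Prop :=
  nonneg_mx D /\ forall j, \sum_(i < p) D i j = 1.

Definition row_stochastic {C : numClosedFieldType} (p q : nat) (D : 'M[C]_(p, q)) : Prop :=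
  nonneg_mx D /\ forall i, \sum_(j < q) D i j = 1.

Definition doubly_stochastic {C : numClosedFieldType} (p q : nat) (D : 'M[C]_(p, q)) : Prop :=
  p = q /\ row_stochastic D /\ col_stochastic D.

Definition Fmx {C : numClosedFieldType} (n m : nat) (D : 'M[C]_(n, m)) (j : 'I_m)
  : 'M[C]_(n, m) :=
  \matrix_(p < n, q < m) (if q == j then sqrtC (D p j) else 0).

From HB Require Import structures.
From mathcomp Require Import all_boot all_order all_algebra.
Set Implicit Arguments. Unset Strict Implicit. Unset Printing Implicit Defensive.
Import Order.TTheory GRing.Theory Num.Theory.
Local Open Scope ring_scope.
Local Open Scope sesquilinear_scope.

(* Conjugating by U and V reduces everything to diagonal matrices.  Given a
   completely positive Phi with Phi (A i) = B i, put
   d_pq = (V Phi (U e_p e_p^* U^* ) V^* )_qq: these are nonnegative because Phi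
   preserves positivity, b = a D because A i = sum_p a_ip U e_p e_p^* U^*, and
   Phi (1) = 1 (resp. tr o Phi = tr) makes the columns (resp. rows) of D sum to
   1, the U e_p e_p^* U^* summing to 1 and having trace 1.  Conversely, with the
   Kraus operators sqrt d_pq e_p e_q^T, X |-> sum K^* X K sends X to the
   diagonal matrix diag ((X_pp)_p D); conjugated back by U and V this map is
   completely positive, interpolates, and is unital (resp. trace preserving)
   as soon as D is column (resp. row) stochastic. *)

Section Adjoint.
Variable C : numClosedFieldType.

Lemma adjmxM p q r (X : 'M[C]_(p, q)) (Y : 'M[C]_(q, r)) :
  (X *m Y)^t* = Y^t* *m X^t*.
Proof. by rewrite trmx_mul map_mxM. Qed.

Lemma adjmxZ p q (c : C) (X : 'M[C]_(p, q)) : (c *: X)^t* = c^* *: X^t*.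
Proof. by rewrite linearZ map_mxZ. Qed.

Lemma adjmx_sum p q (I : finType) (F : I -> 'M[C]_(p, q)) :
  (\sum_r F r)^t* = \sum_r (F r)^t*.
Proof.
apply/matrixP => x y; rewrite !mxE !summxE rmorph_sum.
by apply: eq_bigr => r _; rewrite !mxE.
Qed.

Lemma adjmx_delta p q (i : 'I_p) (j : 'I_q) :
  (delta_mx i j)^t* = delta_mx j i :> 'M[C]_(q, p).
Proof. by rewrite trmx_delta map_delta_mx. Qed.

Lemma hermsymmxP n (M : 'M[C]_n) : reflect (M = M^t*) (M \is hermsymmx).
Proof. by rewrite qualifE /= expr0 scale1r; apply: eqP. Qed.

Lemma unitarymx_adjmul n (U : 'M[C]_n) : U \is unitarymx -> U^t* *m U = 1%:M.
Proof. by move=> HU; rewrite -[U^t*]mul1mx mulmxKtV. Qed.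

Lemma mxtrace_unitary_conj n (U : 'M[C]_n) (X : 'M[C]_n) :
  U \is unitarymx -> \tr (U *m X *m U^t*) = \tr X.
Proof. by move=> HU; rewrite mxtrace_mulC mulmxA unitarymx_adjmul ?mul1mx. Qed.

End Adjoint.

Lemma delta_mx_mulmx_delta (R : comPzRingType) p n n' q
    (i : 'I_p) (s : 'I_n) (t : 'I_n') (j : 'I_q) (X : 'M[R]_(n, n')) :
  delta_mx i s *m X *m delta_mx t j = X s t *: delta_mx i j.
Proof.
rewrite -(mul_delta_mx (0 : 'I_1) i s) -(mul_delta_mx (0 : 'I_1) t j).
rewrite !mulmxA -[delta_mx i 0 *m _ *m _ *m _]mulmxA -[delta_mx i 0 *m _ *m _]mulmxA.
rewrite -rowE -colE [row _ _]mx11_scalar.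
by rewrite mul_mx_scalar -scalemxAl mul_delta_mx !mxE.
Qed.

Section PositiveSemidefinite.
Variable C : numClosedFieldType.

Lemma adjmx_mul_self_ge0 p (x : 'cV[C]_p) : 0 <= (x^t* *m x) 0 0.
Proof.
by rewrite mxE; apply: sumr_ge0 => i _; rewrite !mxE mulrC mul_conjC_ge0.
Qed.

Lemma psdmx_diag_ge0 n (M : 'M[C]_n) i : psdmx M -> 0 <= M i i.
Proof.
move=> [_ /(_ (delta_mx i 0))]; rewrite adjmx_delta delta_mx_mulmx_delta.
by rewrite !mxE mulr1.
Qed.

Lemma psdmx_adjmul p q (X : 'M[C]_(p, q)) : psdmx (X^t* *m X).
Proof.
split; first by apply/hermsymmxP; rewrite adjmxM trmxCK.
by move=> x; rewrite mulmxA -adjmxM -mulmxA adjmx_mul_self_ge0.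
Qed.

Lemma psdmx_congr p q (M : 'M[C]_p) (X : 'M[C]_(p, q)) :
  psdmx M -> psdmx (X^t* *m M *m X).
Proof.
move=> [/hermsymmxP hM pM]; split.
  by apply/hermsymmxP; rewrite !adjmxM trmxCK -hM mulmxA.
by move=> x; have := pM (X *m x); rewrite adjmxM !mulmxA.
Qed.

Lemma psdmx_sum p (I : finType) (F : I -> 'M[C]_p) :
  (forall r, psdmx (F r)) -> psdmx (\sum_r F r).
Proof.
move=> psdF; split.
  apply/hermsymmxP; rewrite adjmx_sum; apply: eq_bigr => r _.
  by apply/hermsymmxP; case: (psdF r).
move=> x; rewrite mulmx_sumr mulmx_suml summxE.
by apply: sumr_ge0 => r _; case: (psdF r).
Qed.

End PositiveSemidefinite.

Section CompletelyPositive.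
Variable C : numClosedFieldType.

Lemma map_mxblock (T1 T2 : Type) (f : T1 -> T2) p q
    (p_ : 'I_p -> nat) (q_ : 'I_q -> nat) (B_ : forall i j, 'M[T1]_(p_ i, q_ j)) :
  map_mx f (\mxblock_(i, j) B_ i j) = \mxblock_(i, j) map_mx f (B_ i j).
Proof. by apply/matrixP => i j; rewrite !mxE. Qed.

Let inj1 n : 'M[C]_(n, \sum_(j < 1) n) := \mxrow_(j < 1) 1%:M.

Let adj_inj1 n : (inj1 n)^t* = \mxcol_(i < 1) 1%:M.
Proof. by apply/matrixP => i j; rewrite !mxE conjC_nat eq_sym. Qed.

Lemma blockmx1_congr n (M : 'M[C]_n) :
  (inj1 n)^t* *m M *m inj1 n = blockmx (fun _ _ : 'I_1 => M).
Proof.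
rewrite adj_inj1 mxcol_mul mul_mxcol_mxrow.
by apply: eq_mxblock => i j; rewrite mul1mx mulmx1.
Qed.

Lemma blockmx1_corner n (M : 'M[C]_n) :
  inj1 n *m blockmx (fun _ _ : 'I_1 => M) *m (inj1 n)^t* = M.
Proof.
by rewrite adj_inj1 mul_mxrow_mxblock mul_mxrow_mxcol !big_ord1 mul1mx mulmx1.
Qed.

Lemma cp_psdmx n m (Phi : 'M[C]_n -> 'M[C]_m) (P : 'M[C]_n) :
  completely_positive Phi -> psdmx P -> psdmx (Phi P).
Proof.
move=> cpPhi psdP.
have psdPblock : psdmx (blockmx (fun _ _ : 'I_1 => P)).
  by rewrite -blockmx1_congr; apply: psdmx_congr.
have := psdmx_congr ((inj1 m)^t*) (cpPhi 1 _ psdPblock).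
by rewrite trmxCK blockmx1_corner.
Qed.

End CompletelyPositive.

Section Kraus.
Variables (C : numClosedFieldType) (n m : nat) (I : finType) (K : I -> 'M[C]_(n, m)).

Definition kraus (X : 'M[C]_n) : 'M[C]_m := \sum_r (K r)^t* *m X *m K r.

Lemma kraus_is_linear : linear kraus.
Proof.
move=> c X Y; rewrite /kraus scaler_sumr -big_split /=; apply: eq_bigr => r _.
by rewrite mulmxDr mulmxDl -scalemxAr -scalemxAl.
Qed.

Lemma kraus_cp : completely_positive kraus.
Proof.
move=> k A psdA.
pose Kblock r : 'M[C]_(\sum_(i < k) n, \sum_(i < k) m) :=
  \mxblock_(i < k, j < k) (if i == j then K r else 0).
suff -> : blockmx (fun i j => kraus (A i j))
          = \sum_r (Kblock r)^t* *m blockmx A *m Kblock r.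
  by apply: psdmx_sum => r; apply: psdmx_congr.
under [RHS]eq_bigr => r _ do rewrite tr_mxblock map_mxblock !mul_mxblock.
rewrite /blockmx mxblock_sum; apply: eq_bigr => r _; apply: eq_mxblock => i j.
under eq_bigr => l _ do rewrite (fun_if (mulmx _)) mulmx0.
rewrite -big_mkcond big_pred1_eq (bigD1 i) //= eqxx big1 ?addr0 // => l /negbTE ->.
by rewrite linear0 map_mx0 mul0mx.
Qed.

End Kraus.

HB.instance Definition _ (C : numClosedFieldType) n m (I : finType)
    (K : I -> 'M[C]_(n, m)) :=
  GRing.isLinear.Build C 'M[C]_n 'M[C]_m *:%R (kraus K) (kraus_is_linear K).

Lemma kraus_mulmx (C : numClosedFieldType) n' n m m' (I : finType)
    (K : I -> 'M[C]_(n, m)) (U : 'M[C]_(n', n)) (V : 'M[C]_(m, m')) X :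
  kraus (fun r => U *m K r *m V) X = V^t* *m kraus K (U^t* *m X *m U) *m V.
Proof.
rewrite /kraus mulmx_sumr mulmx_suml; apply: eq_bigr => r _.
by rewrite !adjmxM !mulmxA.
Qed.

Lemma mul_conj_sqrtC (C : numClosedFieldType) (d : C) :
  0 <= d -> (sqrtC d)^* * sqrtC d = d.
Proof. by move=> d_ge0; rewrite conj_Creal ?sqrtC_real // -expr2 sqrtCK. Qed.

(* Unlike the single-column operators [Fmx D j], these rank-one operators also
   give a trace preserving map when [D] is row stochastic. *)
Definition entry_kraus (C : numClosedFieldType) n m (D : 'M[C]_(n, m))
    (r : 'I_n * 'I_m) : 'M[C]_(n, m) :=
  sqrtC (D r.1 r.2) *: delta_mx r.1 r.2.

Lemma kraus_entryE (C : numClosedFieldType) n m (D : 'M[C]_(n, m)) X :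
  nonneg_mx D -> kraus (entry_kraus D) X = diag_mx ((\row_p X p p) *m D).
Proof.
move=> D_ge0; rewrite /kraus diag_mx_sum_delta.
under eq_bigr => r _ do rewrite /entry_kraus adjmxZ adjmx_delta -!scalemxAl
  -scalemxAr delta_mx_mulmx_delta !scalerA mul_conj_sqrtC //.
rewrite -(pair_bigA _ (fun p q => (D p q * X p p) *: delta_mx q q)) /= exchange_big /=.
apply: eq_bigr => q _; rewrite !mxE scaler_suml; apply: eq_bigr => p _.
by rewrite !mxE mulrC.
Qed.

Lemma Fmx_colE (C : numClosedFieldType) n m (D : 'M[C]_(n, m)) j :
  Fmx D j = (\col_p sqrtC (D p j)) *m delta_mx 0 j.
Proof.
apply/matrixP => p q; rewrite !mxE big_ord1 !mxE eqxx /= eq_sym.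
by case: eqP => [->|_]; rewrite ?mulr1 ?mulr0.
Qed.

Lemma kraus_Fmx_diag (C : numClosedFieldType) n m (D : 'M[C]_(n, m))
    (d : 'rV[C]_n) :
  nonneg_mx D -> kraus (Fmx D) (diag_mx d) = diag_mx (d *m D).
Proof.
move=> D_ge0; rewrite /kraus diag_mx_sum_delta; apply: eq_bigr => j _.
set s := \col_p sqrtC (D p j).
have -> : (Fmx D j)^t* *m diag_mx d *m Fmx D j
    = delta_mx j 0 *m (s^t* *m diag_mx d *m s) *m delta_mx 0 j.
  by rewrite Fmx_colE adjmxM adjmx_delta !mulmxA.
rewrite delta_mx_mulmx_delta mul_mx_diag !mxE; congr (_ *: _).
by apply: eq_bigr => p _; rewrite !mxE mulrAC mul_conj_sqrtC // mulrC.
Qed.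

Lemma mxtrace_delta (R : pzRingType) n (j : 'I_n) : \tr (delta_mx j j : 'M[R]_n) = 1.
Proof.
rewrite /mxtrace (bigD1 j) //= mxE !eqxx big1 ?addr0 // => i /negbTE ni.
by rewrite mxE ni.
Qed.

Section Interpolation.
Variables (C : numClosedFieldType) (n m k : nat).
Variables (A : 'I_k -> 'M[C]_n) (B : 'I_k -> 'M[C]_m) (U : 'M[C]_n) (V : 'M[C]_m).
Variables (a : 'M[C]_(k, n)) (b : 'M[C]_(k, m)).
Hypotheses (HU : U \is unitarymx) (HV : V \is unitarymx).
Hypothesis HUa : forall i, U ^t* *m A i *m U = diag_mx (row i a).
Hypothesis HVb : forall i, V *m B i *m V ^t* = diag_mx (row i b).

Lemma B_diagE i : B i = V^t* *m diag_mx (row i b) *m V.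
Proof. by rewrite -HVb !mulmxA unitarymx_adjmul // mul1mx mulmxKtV. Qed.

Lemma kraus_interpolation (I : finType) (K : I -> 'M[C]_(n, m)) (D : 'M[C]_(n, m)) :
  (forall d, kraus K (diag_mx d) = diag_mx (d *m D)) -> b = a *m D ->
  forall i, kraus (fun r => U *m K r *m V) (A i) = B i.
Proof. by move=> KD bE i; rewrite kraus_mulmx HUa KD -row_mul -bE -B_diagE. Qed.

Definition spectral_proj (j : 'I_n) : 'M[C]_n := U *m delta_mx j j *m U^t*.

Lemma spectral_proj_psd j : psdmx (spectral_proj j).
Proof.
have -> : spectral_proj j = (delta_mx (0 : 'I_1) j *m U^t*)^t* *m (delta_mx 0 j *m U^t*).
  rewrite adjmxM adjmx_delta trmxCK /spectral_proj mulmxA.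
  by rewrite -(mulmxA U (delta_mx j 0)) mul_delta_mx.
exact: psdmx_adjmul.
Qed.

Lemma sum_spectral_proj : \sum_j spectral_proj j = 1%:M.
Proof. by rewrite -mulmx_suml -mulmx_sumr -mx1_sum_delta mulmx1; apply/unitarymxP. Qed.

Lemma spectral_decomposition i : A i = \sum_j a i j *: spectral_proj j.
Proof.
have -> : A i = U *m (U^t* *m A i *m U) *m U^t*.
  by rewrite !mulmxA (unitarymxP HU) mul1mx mulmxtVK.
rewrite HUa diag_mx_sum_delta mulmx_sumr mulmx_suml; apply: eq_bigr => j _.
by rewrite mxE -scalemxAr -scalemxAl.
Qed.

Section Necessity.
Variable Phi : {linear 'M[C]_n -> 'M[C]_m}.

Definition transfer_mx : 'M[C]_(n, m) :=
  \matrix_(j, q) (V *m Phi (spectral_proj j) *m V^t*) q q.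

Lemma transfer_mx_nonneg : completely_positive Phi -> nonneg_mx transfer_mx.
Proof.
move=> cpPhi j q; have psdPhiP := cp_psdmx cpPhi (spectral_proj_psd j).
rewrite mxE; have := psdmx_diag_ge0 q (psdmx_congr (V^t*) psdPhiP).
by rewrite trmxCK.
Qed.

Lemma transfer_mx_interpolation : (forall i, Phi (A i) = B i) -> b = a *m transfer_mx.
Proof.
move=> PhiAB; apply/matrixP => i q.
have -> : b i q = (V *m B i *m V^t*) q q by rewrite HVb !mxE eqxx mulr1n.
rewrite -PhiAB spectral_decomposition linear_sum mulmx_sumr mulmx_suml summxE !mxE.
by apply: eq_bigr => j _; rewrite linearZ -scalemxAr -scalemxAl !mxE.
Qed.

Lemma transfer_mx_col_stochastic : completely_positive Phi -> unital_map Phi ->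
  col_stochastic transfer_mx.
Proof.
move=> cpPhi unitalPhi; split; first exact: transfer_mx_nonneg.
move=> q; transitivity ((V *m Phi (\sum_j spectral_proj j) *m V^t*) q q).
  rewrite linear_sum mulmx_sumr mulmx_suml summxE.
  by apply: eq_bigr => j _; rewrite mxE.
by rewrite sum_spectral_proj unitalPhi mulmx1 (unitarymxP HV) mxE eqxx.
Qed.

Lemma transfer_mx_row_stochastic : completely_positive Phi -> trace_preserving Phi ->
  row_stochastic transfer_mx.
Proof.
move=> cpPhi tpPhi; split; first exact: transfer_mx_nonneg.
move=> j; transitivity (\tr (V *m Phi (spectral_proj j) *m V^t*)).
  by apply: eq_bigr => q _; rewrite mxE.
by rewrite mxtrace_unitary_conj // tpPhi mxtrace_unitary_conj // mxtrace_delta.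
Qed.

End Necessity.

Section Sufficiency.
Variable D : 'M[C]_(n, m).

Lemma kraus_entry_diag (d : 'rV[C]_n) : nonneg_mx D ->
  kraus (entry_kraus D) (diag_mx d) = diag_mx (d *m D).
Proof.
move=> D_ge0; rewrite kraus_entryE //; congr (diag_mx (_ *m _)).
by apply/matrixP => i p; rewrite ord1 !mxE eqxx.
Qed.

Lemma kraus_entry_interpolation : nonneg_mx D -> b = a *m D ->
  forall i, kraus (fun r => U *m entry_kraus D r *m V) (A i) = B i.
Proof. by move=> D_ge0; apply: kraus_interpolation => d; apply: kraus_entry_diag. Qed.

Lemma kraus_entry_unital : col_stochastic D ->
  unital_map (kraus (fun r => U *m entry_kraus D r *m V)).
Proof.
move=> [D_ge0 colD]; rewrite /unital_map kraus_mulmx mulmx1 unitarymx_adjmul //.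
have colD1 : (const_mx 1 : 'rV[C]_n) *m D = const_mx 1.
  apply/matrixP => i q; rewrite ord1 !mxE -[RHS](colD q).
  by apply: eq_bigr => p _; rewrite mxE mul1r.
rewrite -diag_const_mx kraus_entry_diag // colD1 diag_const_mx mulmx1.
exact: unitarymx_adjmul.
Qed.

Lemma kraus_entry_trace_preserving : row_stochastic D ->
  trace_preserving (kraus (fun r => U *m entry_kraus D r *m V)).
Proof.
move=> [D_ge0 rowD] X; rewrite kraus_mulmx -[V in _ *m V]trmxCK.
rewrite mxtrace_unitary_conj ?trmxC_unitary // kraus_entryE // mxtrace_diag.
under eq_bigr => q _ do rewrite mxE.
rewrite exchange_big; under eq_bigr => p _ do rewrite -mulr_sumr rowD mulr1 mxE.
by rewrite -[RHS](@mxtrace_unitary_conj _ _ (U^t*)) ?trmxC_unitary // trmxCK.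
Qed.

Lemma Fmx_interpolation : nonneg_mx D -> b = a *m D ->
  forall i, B i = \sum_(j < m) (U *m Fmx D j *m V)^t* *m A i *m (U *m Fmx D j *m V).
Proof.
move=> D_ge0 bE i.
by rewrite -(kraus_interpolation (fun d => kraus_Fmx_diag d D_ge0) bE).
Qed.

End Sufficiency.
End Interpolation.

Lemma unital_trace_preserving_dim (C : numClosedFieldType) n m
    (Phi : 'M[C]_n -> 'M[C]_m) :
  unital_map Phi -> trace_preserving Phi -> n = m.
Proof.
by move=> unitalPhi tpPhi; apply/eqP; rewrite -(eqr_nat C) -!mxtrace1 -unitalPhi tpPhi.
Qed.

Theorem theorem2p1 (C : numClosedFieldType) (n m k : nat)
  (Hn : (0 < n)%N) (Hm : (0 < m)%N)
  (A : 'I_k -> 'M[C]_n) (B : 'I_k -> 'M[C]_m)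
  (HA : forall i, A i \is hermsymmx) (HB : forall i, B i \is hermsymmx)
  (HAc : forall i j, A i *m A j = A j *m A i)
  (HBc : forall i j, B i *m B j = B j *m B i)
  (U : 'M[C]_n) (V : 'M[C]_m) (HU : U \is unitarymx) (HV : V \is unitarymx)
  (a : 'M[C]_(k, n)) (b : 'M[C]_(k, m))
  (HUa : forall i, U ^t* *m A i *m U = diag_mx (row i a))
  (HVb : forall i, V *m B i *m V ^t* = diag_mx (row i b)) :
  [/\ (exists Phi : {linear 'M[C]_n -> 'M[C]_m},
          completely_positive Phi /\ forall i, Phi (A i) = B i)
      <-> (exists D : 'M[C]_(n, m), nonneg_mx D /\ b = a *m D),
      (forall D : 'M[C]_(n, m), nonneg_mx D -> b = a *m D ->
         forall i, B i = \sum_(j < m)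
           (U *m Fmx D j *m V) ^t* *m A i *m (U *m Fmx D j *m V)),
      (exists Phi : {linear 'M[C]_n -> 'M[C]_m},
          [/\ completely_positive Phi, unital_map Phi & forall i, Phi (A i) = B i])
      <-> (exists D : 'M[C]_(n, m), col_stochastic D /\ b = a *m D),
      (exists Phi : {linear 'M[C]_n -> 'M[C]_m},
          [/\ completely_positive Phi, trace_preserving Phi & forall i, Phi (A i) = B i])
      <-> (exists D : 'M[C]_(n, m), row_stochastic D /\ b = a *m D)
    & (exists Phi : {linear 'M[C]_n -> 'M[C]_m},
          [/\ completely_positive Phi, unital_map Phi, trace_preserving Phi
            & forall i, Phi (A i) = B i])
      <-> (exists D : 'M[C]_(n, m), doubly_stochastic D /\ b = a *m D)].
Proof.
have transfer_b := transfer_mx_interpolation HU HUa HVb.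
have transfer_col := transfer_mx_col_stochastic HU HV.
have transfer_row := transfer_mx_row_stochastic HU HV.
have kraus_B := kraus_entry_interpolation HV HUa HVb.
have kraus_unital := kraus_entry_unital HU HV.
have kraus_tp := kraus_entry_trace_preserving HU HV.
split.
- split=> [[Phi [cpPhi PhiAB]] | [D [D_ge0 bE]]].
    exists (transfer_mx U V Phi).
    by split; [apply: transfer_mx_nonneg | apply: transfer_b].
  by eexists; split; [apply: kraus_cp | apply: kraus_B].
- exact: Fmx_interpolation HV HUa HVb.
- split=> [[Phi [cpPhi unitalPhi PhiAB]] | [D [colD bE]]].
    by eexists; split; [apply: transfer_col unitalPhi | apply: transfer_b].
  by eexists; split; [apply: kraus_cp | apply: kraus_unital | apply: kraus_B colD.1 bE].
- split=> [[Phi [cpPhi tpPhi PhiAB]] | [D [rowD bE]]].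
    by eexists; split; [apply: transfer_row tpPhi | apply: transfer_b].
  by eexists; split; [apply: kraus_cp | apply: kraus_tp | apply: kraus_B rowD.1 bE].
- split=> [[Phi [cpPhi unitalPhi tpPhi PhiAB]] | [D [[_ [rowD colD]] bE]]].
    exists (transfer_mx U V Phi); split; last exact: transfer_b.
    split; first exact: unital_trace_preserving_dim unitalPhi tpPhi.
    by split; [apply: transfer_row tpPhi | apply: transfer_col unitalPhi].
  eexists; split; [apply: kraus_cp | apply: kraus_unital colD | apply: kraus_tp rowD |].
  exact: kraus_B colD.1 bE.
Qed.
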